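(* Let $n\ge2$ and let $D_n$ be the group of even signed permutations of $\{\pm1,\ldots,\pm n\}$. For $\pi\in D_n$ set $\pi(0)=-\pi(2)$, $\mathrm{des}(\pi)=\#\{0\le i<n : \pi(i)>\pi(i+1)\}$ and $\mathrm{ides}(\pi)=\mathrm{des}(\pi^{-1})$. For $\pi$ uniformly random in $D_n$ let $X_{\mathrm{des}}=\mathrm{des}(\pi)$ and $X_{\mathrm{des}+\mathrm{ides}}=\mathrm{des}(\pi)+\mathrm{ides}(\pi)$. Then \[ \mathbb{E}(X_{\mathrm{des}+\mathrm{ides}})=n,\qquad \mathbb{V}(X_{\mathrm{des}+\mathrm{ides}}) = 2\,\mathbb{V}(X_{\mathrm{des}}) + \frac{n}{2n-2}. \]
   Context: A signed permutation is a bijection $\pi$ of $\{\pm1,\ldots,\pm n\}$ with $\pi(-i)=-\pi(i)$, written $[\pi(1),\ldots,\pi(n)]$; it is even if an even number of $\pi(1),\ldots,\pi(n)$ are negative. The convention $\pi(0)=-\pi(2)$ is applied to both $\pi$ and $\pi^{-1}$. *)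

From mathcomp Require Import all_boot all_order all_fingroup all_algebra.
Set Implicit Arguments. Unset Strict Implicit. Unset Printing Implicit Defensive.
Import Order.TTheory GRing.Theory Num.Theory.
Local Open Scope ring_scope.

(* A signed permutation pi of {+-1,...,+-n} is encoded as a pair (s, e) with
   s : 'S_n and e : {ffun 'I_n -> bool}, meaning
   pi(i+1) = (-1)^(e i) * (s i + 1)   for i : 'I_n. *)
Definition sperm (n : nat) := ('S_n * {ffun 'I_n -> bool})%type.

(* value pi(k) for k = 1..n (given as an ordinal k-1) *)
Definition spval n (p : sperm n) (i : 'I_n) : int :=
  if p.2 i then - ((p.1 i).+1)%:Z else ((p.1 i).+1)%:Z.

(* value pi(k) for a natural number k, with the convention pi(0) = -pi(2). *)
Definition spat n (p : sperm n) (k : nat) : int :=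
  match k with
  | 0%N => match insub 1%N : option 'I_n with
           | Some j => - spval p j | None => 0 end
  | k'.+1 => match insub k' : option 'I_n with
             | Some j => spval p j | None => 0 end
  end.

(* inverse signed permutation: pi^{-1}(s i + 1) = (-1)^(e i) (i+1) *)
Definition spinv n (p : sperm n) : sperm n :=
  (p.1^-1, [ffun j => p.2 (p.1^-1 j)])%g.

Definition speven n (p : sperm n) : bool := ~~ odd #|[set i | p.2 i]|.

Definition des n (p : sperm n) : nat :=
  #|[set i : 'I_n | spat p (val i).+1 < spat p (val i)]|.

Definition ides n (p : sperm n) : nat := des (spinv p).

Definition ED n (X : sperm n -> nat) : rat :=
  (\sum_(p : sperm n | speven p) (X p)%:R) / (#|[set p : sperm n | speven p]|)%:R.

Definition VD n (X : sperm n -> nat) : rat :=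
  ED (fun p => (X p) ^ 2)%N - (ED X) ^+ 2.

From mathcomp Require Import all_boot all_order all_fingroup all_algebra.
From mathcomp Require Import zify.
From mathcomp.algebra_tactics Require Import ring.
Set Implicit Arguments. Unset Strict Implicit. Unset Printing Implicit Defensive.
Import Order.TTheory GRing.Theory Num.Theory.

(* Write des and ides as sums of the indicators of a descent of pi at position i
   and of pi^-1 at position j.  Right multiplication by the simple reflection
   s_i of D_n is an involution that toggles the descent of pi at i, and left
   multiplication by s_j toggles the descent of pi^-1 at j; hence
   E(des) = E(ides) = n/2, and des, ides are equidistributed via pi |-> pi^-1.
   The two indicators coincide when pi maps the pair of positions (i, i+1)
   (position 0 standing for -2) onto +-(j, j+1) in either order, and are
   independent otherwise, since then one involution toggles one indicator and
   fixes the other.  So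
   4 E(des ides) = n^2 + sum_(i,j) P(pi maps (i, i+1) onto +-(j, j+1)).  For
   n > 2 each probability is 1/(n(n-1)), because the values of pi at two
   positions are jointly uniform over the 4n(n-1) admissible pairs (a third
   sign absorbs the parity constraint); for n = 2 the sum is 2 by inspection.
   Hence 2 Cov(des, ides) = n/(2n-2). *)

Section Counting.
Variable T : finType.
Implicit Types (A : {set T}) (P : pred T).

Lemma card_set_in_sum A P : #|[set x in A | P x]| = \sum_(x in A) P x.
Proof.
rewrite -sum1_card [RHS]big_mkcond [LHS]big_mkcond; apply: eq_bigr => x _.
by rewrite !inE; case: (x \in A); case: (P x).
Qed.

Lemma card_set_sum P : #|[set x | P x]| = \sum_x P x.
Proof. by rewrite -sum1_card big_mkcond; apply: eq_bigr => x _; rewrite !inE; case: (P x). Qed.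

Lemma card_sepID A P : #|A| = #|[set x in A | P x]| + #|[set x in A | ~~ P x]|.
Proof. by rewrite !card_set_in_sum -big_split -sum1_card; apply: eq_bigr => x _; case: (P x). Qed.

Lemma odd_card_addb (P Q : pred T) :
  odd #|[set x | P x (+) Q x]| = odd #|[set x | P x]| (+) odd #|[set x | Q x]|.
Proof.
have cardPQ : \sum_x (P x (+) Q x : nat) + (\sum_x (P x && Q x : nat)).*2 =
              \sum_x (P x : nat) + \sum_x (Q x : nat).
  by rewrite -addnn -!big_split; apply: eq_bigr => x _; case: (P x); case: (Q x).
by rewrite !card_set_sum -oddD -cardPQ oddD odd_double addbF.
Qed.

Lemma card_set_perm (t : {perm T}) P : #|[set x | P (t x)]| = #|[set x | P x]|.
Proof. by rewrite -[RHS](card_preimset _ (@perm_inj _ t)); apply: eq_card => x; rewrite !inE. Qed.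

Lemma card_involution_half (f : T -> T) A P : involutive f ->
  {in A, forall x, f x \in A} -> {in A, forall x, P (f x) = ~~ P x} ->
  2 * #|[set x in A | P x]| = #|A|.
Proof.
move=> fK fA fP; rewrite (card_sepID A P) mul2n -addnn; congr addn.
rewrite -(card_imset _ (inv_inj fK)); apply: eq_card => y; rewrite !inE.
apply/imsetP/idP => [[x]|/andP [yA nPy]].
  by rewrite inE => /andP [xA Px] ->; rewrite fA // fP // Px.
by exists (f y); rewrite ?fK // inE fA //= fP // nPy.
Qed.

End Counting.

Lemma sum_card_exchange (I T : finType) (A : {set T}) (F : I -> pred T) :
  \sum_(x in A) #|[set i | F i x]| = \sum_i #|[set x in A | F i x]|.
Proof.
under eq_bigr => x _ do rewrite card_set_sum.
by rewrite exchange_big; apply: eq_bigr => i _; rewrite card_set_in_sum.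
Qed.

Lemma sum_card_mul_exchange (I J T : finType) (A : {set T}) (F : I -> pred T) (G : J -> pred T) :
  \sum_(x in A) #|[set i | F i x]| * #|[set j | G j x]| =
  \sum_i \sum_j #|[set x in A | F i x && G j x]|.
Proof.
under eq_bigr => x _ do rewrite !card_set_sum big_distrl.
under eq_bigr => x _ do under eq_bigr => i _ do rewrite big_distrr.
rewrite exchange_big; apply: eq_bigr => i _; rewrite exchange_big; apply: eq_bigr => j _.
by rewrite card_set_in_sum; apply: eq_bigr => x _; case: (F i x); case: (G j x).
Qed.

Lemma card_in_mem_seq (T : finType) (U : eqType) (A : {set T}) (f : T -> U) (s : seq U) :
  uniq s -> #|[set x in A | f x \in s]| = \sum_(u <- s) #|[set x in A | f x == u]|.
Proof.
move=> s_uniq; rewrite card_set_in_sum.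
rewrite (eq_bigr (fun u => \sum_(x in A) (f x == u : nat))) => [|u _]; last exact: card_set_in_sum.
rewrite exchange_big /=; apply: eq_bigr => x _.
by rewrite -(count_uniq_mem _ s_uniq) -sum1_count big_mkcond; apply: eq_bigr => u _; rewrite eq_sym.
Qed.

Lemma card_fibers (T J : finType) (A : {set T}) (f : T -> J) :
  #|A| = \sum_j #|[set x in A | f x == j]|.
Proof.
rewrite -sum1_card (partition_big f xpredT) //; apply: eq_bigr => j _.
by rewrite -sum1_card; apply: eq_bigl => x; rewrite inE.
Qed.

Section PermFibers.
Variable n : nat.
Implicit Types (k m : 'I_n).

Definition perm_fiber k1 k2 m1 m2 := [set s : {perm 'I_n} | (s k1 == m1) && (s k2 == m2)].

Lemma card_perm_fiber_le k1 k2 m1 m2 m1' m2' : m1 != m2 -> m1' != m2' ->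
  #|perm_fiber k1 k2 m1 m2| <= #|perm_fiber k1 k2 m1' m2'|.
Proof.
move=> m12 m12'; set b := tperm m1 m1' m2; set t := (tperm m1 m1' * tperm b m2')%g.
have b_neq : b != m1'.
  by rewrite /b -[m1' in _ != m1'](tpermL m1 m1') (inj_eq perm_inj) eq_sym.
have t1 : t m1 = m1' by rewrite permM tpermL tpermD // eq_sym.
have t2 : t m2 = m2' by rewrite permM -/b tpermL.
rewrite -(card_imset _ (mulIg t)); apply: subset_leq_card; apply/subsetP => _ /imsetP [s + ->].
by rewrite !inE ![(s * t)%g _]permM => /andP [/eqP -> /eqP ->]; rewrite t1 t2 !eqxx.
Qed.

Lemma card_perm_fiber k1 k2 m1 m2 : k1 != k2 -> m1 != m2 ->
  #|perm_fiber k1 k2 m1 m2| * (n * n.-1) = n`!.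
Proof.
move=> k12 m12.
have fiber_eq m1' m2' : m2' != m1' -> #|perm_fiber k1 k2 m1' m2'| = #|perm_fiber k1 k2 m1 m2|.
  by move=> m12'; apply/anti_leq; rewrite !card_perm_fiber_le // eq_sym.
rewrite -card_Sn -[RHS]sum1_card.
rewrite (partition_big (fun s : {perm 'I_n} => (s k1, s k2))
                      (fun m : 'I_n * 'I_n => m.2 != m.1)) /=; last first.
  by move=> s _; rewrite (inj_eq perm_inj) eq_sym.
rewrite (eq_bigr (fun _ => #|perm_fiber k1 k2 m1 m2|)); last first.
  move=> [a c] /= ca; rewrite -(fiber_eq a c ca) -[RHS]sum1_card; apply: eq_bigl => s.
  by rewrite !inE xpair_eqE.
rewrite sum_nat_const mulnC; congr (_ * _).
rewrite -sum1_card (eq_bigl (fun m : 'I_n * 'I_n => xpredT m.1 && (m.2 != m.1))) //.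
rewrite -(pair_big_dep xpredT (fun a c : 'I_n => c != a) (fun _ _ => 1)) /=.
under eq_bigr => a _ do rewrite (sum1_card (predC1 a)) cardC1 card_ord.
by rewrite sum_nat_const card_ord.
Qed.

End PermFibers.

Section SignFibers.
Variable n : nat.
Implicit Types (k : 'I_n) (e : {ffun 'I_n -> bool}) (K : {set 'I_n}).

Definition even_signs := [set e : {ffun 'I_n -> bool} | ~~ odd #|[set k | e k]|].

Definition sign_fiber k1 k2 b1 b2 := [set e in even_signs | (e k1 == b1) && (e k2 == b2)].

Definition flip_signs K e : {ffun 'I_n -> bool} := [ffun k => (k \in K) (+) e k].

Lemma flip_signsK K : involutive (flip_signs K).
Proof. by move=> e; apply/ffunP => k; rewrite !ffunE addbA addbb. Qed.

Lemma flip_signs_even K e : ~~ odd #|K| -> (flip_signs K e \in even_signs) = (e \in even_signs).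
Proof.
move=> K_even; rewrite !inE (eq_card (B := [set k | (k \in K) (+) e k])); last first.
  by move=> k; rewrite !inE ffunE.
rewrite odd_card_addb (_ : [set k | k \in K] = K) ?(negbTE K_even) //.
by apply/setP => k; rewrite inE.
Qed.

Lemma card_sign_fiber_le k1 k2 K b1 b2 c1 c2 : ~~ odd #|K| ->
  b1 (+) c1 = (k1 \in K) -> b2 (+) c2 = (k2 \in K) ->
  #|sign_fiber k1 k2 b1 b2| <= #|sign_fiber k1 k2 c1 c2|.
Proof.
move=> K_even K1 K2; rewrite -(card_imset _ (inv_inj (flip_signsK K))).
apply/subset_leq_card/subsetP => _ /imsetP [e + ->].
rewrite [in X in X -> _]inE [in X in _ -> X]inE flip_signs_even // !ffunE -K1 -K2.
by case/and3P => -> /eqP <- /eqP <-; rewrite [_ (+) c1]addbC [_ (+) c2]addbC !addbK !eqxx.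
Qed.

Lemma exists_ord_neq2 k1 k2 : (2 < n)%N -> exists k3, (k3 != k1) && (k3 != k2).
Proof.
move=> n_gt2; case: (pickP (fun k => (k != k1) && (k != k2))) => [k3 k3P|none].
  by exists k3.
have : #|'I_n| <= #|[set k1; k2]|.
  apply/subset_leq_card/subsetP => k _; move: (none k); rewrite !inE.
  by case: (k == k1); case: (k == k2).
by rewrite card_ord cards2; case: (k1 != k2) => /=; lia.
Qed.

Lemma card_sign_fiber_eq k1 k2 b1 b2 c1 c2 : (2 < n)%N -> k1 != k2 ->
  #|sign_fiber k1 k2 b1 b2| = #|sign_fiber k1 k2 c1 c2|.
Proof.
move=> n_gt2 k12; have [k3 /andP [k31 k32]] := exists_ord_neq2 k1 k2 n_gt2.
(* flipping the signs at k and at a third position k3 preserves the parity *)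
have K1_even : ~~ odd #|[set k1; k3]| by rewrite cards2 eq_sym k31.
have K2_even : ~~ odd #|[set k2; k3]| by rewrite cards2 eq_sym k32.
have k1K1 : k1 \in [set k1; k3] by rewrite set21.
have k2K2 : k2 \in [set k2; k3] by rewrite set21.
have k2K1 : k2 \notin [set k1; k3] by rewrite !inE negb_or eq_sym k12 eq_sym k32.
have k1K2 : k1 \notin [set k2; k3] by rewrite !inE negb_or k12 eq_sym k31.
have flip1 d1 d2 : #|sign_fiber k1 k2 d1 d2| = #|sign_fiber k1 k2 (~~ d1) d2|.
  by apply/anti_leq; rewrite !(card_sign_fiber_le K1_even) ?(negbTE k2K1) ?k1K1 ?addbb //;
    case: d1.
have flip2 d1 d2 : #|sign_fiber k1 k2 d1 d2| = #|sign_fiber k1 k2 d1 (~~ d2)|.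
  by apply/anti_leq; rewrite !(card_sign_fiber_le K2_even) ?(negbTE k1K2) ?k2K2 ?addbb //;
    case: d2.
have -> : #|sign_fiber k1 k2 b1 b2| = #|sign_fiber k1 k2 c1 b2|.
  by case: b1 c1 => [] []; rewrite // flip1.
by case: b2 c2 => [] []; rewrite // flip2.
Qed.

Lemma card_sign_fiber k1 k2 b1 b2 : (2 < n)%N -> k1 != k2 ->
  #|sign_fiber k1 k2 b1 b2| * 4 = #|even_signs|.
Proof.
move=> n_gt2 k12; rewrite (card_fibers even_signs (fun e => (e k1, e k2))).
rewrite (eq_bigr (fun _ => #|sign_fiber k1 k2 b1 b2|)) => [|[c1 c2] _].
  by rewrite sum_nat_const card_prod card_bool mulnC.
by rewrite (card_sign_fiber_eq c1 c2 b1 b2 n_gt2 k12).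
Qed.

End SignFibers.

Local Open Scope ring_scope.

(* pi(k) = pi(slot k) for the odd extension of pi, so slot 0 = -2 encodes the
   convention pi(0) = -pi(2). *)
Definition slot (k : nat) : int := if k is 0%N then -2 else k%:Z.

(* The simple reflections of D_n acting on values; s_0 = (1 -2)(-1 2). *)
Definition sref (i : nat) (z : int) : int :=
  let a := slot i in let b := slot i.+1 in
  if z == a then b else if z == b then a else
  if z == - a then - b else if z == - b then - a else z.

Definition sref_inversion (i : nat) (x y : int) : bool :=
  [|| (x == slot i) && (y == slot i.+1), (x == slot i.+1) && (y == slot i),
      (x == - slot i) && (y == - slot i.+1) | (x == - slot i.+1) && (y == - slot i)].

Definition inpm (n : nat) (z : int) : bool := (z != 0) && (`|z| <= n%:Z).

Ltac case_eqs := repeat (case: eqP => /= ?); try lia.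
Ltac sref_cases i := rewrite /sref_inversion /sref; case: i => [|i] /=;
  repeat match goal with |- context [?x == ?a] => is_var x; case: (x =P a) => [?|?]; [subst x|] end;
  case_eqs.

Lemma slot_lt i : slot i < slot i.+1.
Proof. by case: i => [|i] /=; lia. Qed.

Lemma slot_norm_neq i : `|slot i| != `|slot i.+1|.
Proof. by case: i => [|i] /=; lia. Qed.

Lemma inpm_slot n i : (1 < n)%N -> (i < n)%N -> inpm n (slot i) && inpm n (slot i.+1).
Proof. by rewrite /inpm; case: i => [|i] /=; lia. Qed.

Lemma inpmN n z : inpm n (- z) = inpm n z.
Proof. by rewrite /inpm; lia. Qed.

Lemma srefK i : involutive (sref i).
Proof. by move=> z; sref_cases i. Qed.

Lemma srefN i z : sref i (- z) = - sref i z.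
Proof. by sref_cases i. Qed.

Lemma sref_slot i : sref i (slot i) = slot i.+1.
Proof. by rewrite /sref eqxx. Qed.

Lemma sref_slotS i : sref i (slot i.+1) = slot i.
Proof. by sref_cases i. Qed.

Lemma sref_inpm n i z : (1 < n)%N -> (i < n)%N -> inpm n z -> inpm n (sref i z).
Proof. by rewrite /inpm; sref_cases i. Qed.

Lemma sref_lt i x y : x != 0 -> y != 0 -> `|x| != `|y| -> ~~ sref_inversion i x y ->
  (sref i y < sref i x) = (y < x).
Proof. by rewrite /sref_inversion /sref; case: i => [|i] /=; case_eqs. Qed.

Lemma sref_inversion_sref i x y :
  sref_inversion i (sref i x) (sref i y) = sref_inversion i x y.
Proof. by sref_cases i. Qed.

Lemma sref_inversionC i x y : sref_inversion i y x = sref_inversion i x y.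
Proof. by sref_cases i. Qed.

Definition negif (b : bool) (x : int) : int := if b then - x else x.

Lemma negifK b : involutive (negif b).
Proof. by case: b => x //=; rewrite opprK. Qed.

Lemma negif_addb a b x : negif (a (+) b) x = negif a (negif b x).
Proof. by case: a; case: b => //=; rewrite opprK. Qed.

Lemma negif_eq b x y : (negif b x == y) = (x == negif b y).
Proof. by case: b => //=; rewrite eqr_oppLR. Qed.

Lemma inpm_negif n b z : inpm n (negif b z) = inpm n z.
Proof. by case: b; rewrite ?inpmN. Qed.

Lemma inpmP n z : inpm n z -> exists (k : 'I_n) b, z = negif b (k.+1)%:Z.
Proof.
rewrite /inpm; case: z => [[|m]|m] //= zn; have mn : (m < n)%N by lia.
  by exists (Ordinal mn), false.
by exists (Ordinal mn), true.
Qed.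

Lemma inpm_ord n b (k : 'I_n) : inpm n (negif b (k.+1)%:Z).
Proof. by rewrite inpm_negif /inpm; have := ltn_ord k; lia. Qed.

Section Action.
Variable n : nat.
Implicit Types (p : sperm n) (x y z : int).

(* The odd extension of pi to all integers; note sact p 0 = 0, whereas spat p 0
   is pi(0) = -pi(2). *)
Definition sact p z : int :=
  match z with Posz 0 => 0 | Posz k.+1 => spat p k.+1 | Negz k => - spat p k.+1 end.

Lemma spvalE p k : spval p k = negif (p.2 k) ((p.1 k).+1)%:Z.
Proof. by []. Qed.

Lemma sactN p z : sact p (- z) = - sact p z.
Proof. by case: z => [[|k]|k] //=; rewrite opprK. Qed.

Lemma sact_negif p b z : sact p (negif b z) = negif b (sact p z).
Proof. by case: b => //=; rewrite sactN. Qed.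

Lemma sact_slot p k : sact p (slot k) = spat p k.
Proof. by case: k => [|k] //=; rewrite /spat /=; case: insub => [j|] //=; rewrite oppr0. Qed.

Lemma sact_ord p (k : 'I_n) : sact p (k.+1)%:Z = spval p k.
Proof.
rewrite /= /spat (insubT (fun j => j < n)%N (ltn_ord k)) /=.
by congr spval; apply: val_inj.
Qed.

Lemma sact_inpm p z : inpm n z -> inpm n (sact p z).
Proof.
by case/inpmP=> k [b ->]; rewrite sact_negif sact_ord spvalE !inpm_negif (inpm_ord false).
Qed.

Lemma sact_neq0 p z : inpm n z -> sact p z != 0.
Proof. by move/(sact_inpm p)/andP=> []. Qed.

Lemma spinvK : involutive (@spinv n).
Proof.
case=> s e; rewrite /spinv /= invgK; congr pair.
by apply/ffunP => j; rewrite !ffunE permK.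
Qed.

Lemma sactK p z : inpm n z -> sact (spinv p) (sact p z) = z.
Proof.
case/inpmP=> k [b ->]; rewrite !sact_negif sact_ord spvalE sact_negif sact_ord.
by rewrite spvalE /spinv /= ffunE !permK negifK.
Qed.

Lemma sactVK p z : inpm n z -> sact p (sact (spinv p) z) = z.
Proof. by move=> zn; rewrite -{1}(spinvK p) sactK. Qed.

Lemma sact_eq p x y : inpm n x -> inpm n y -> (sact p x == y) = (x == sact (spinv p) y).
Proof. by move=> xn yn; apply/eqP/eqP => [<-|->]; rewrite ?sactK ?sactVK. Qed.

Lemma sact_norm_neq p x y : inpm n x -> inpm n y -> `|x| != `|y| ->
  `|sact p x| != `|sact p y|.
Proof.
move=> xn yn xy; apply: contra xy => /eqP pxy.
have : (sact p y == sact p x) || (sact p y == - sact p x) by lia.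
by rewrite -sactN !sact_eq ?sact_inpm ?inpmN // !sactK ?inpmN //; lia.
Qed.

End Action.

Section Reflection.
Variable n : nat.
Implicit Types (i k : 'I_n) (p : sperm n).

(* rsref i p is the product p s_i in the encoding of sperm (see sact_rsref):
   s_i (i > 0) swaps the 0-based positions i-1 and i, while s_0 swaps the
   positions 0 and 1 and flips both signs. *)
Definition sref_perm i : {perm 'I_n} :=
  if val i == 0%N then tperm (insubd i 0%N) (insubd i 1%N) else tperm (insubd i i.-1) i.

Definition sref_flip i k : bool :=
  (val i == 0%N) && ((k == insubd i 0%N) || (k == insubd i 1%N)).

Definition rsref i p : sperm n :=
  ((sref_perm i * p.1)%g, [ffun k => sref_flip i k (+) p.2 (sref_perm i k)]).

Lemma sref_permK i : involutive (sref_perm i).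
Proof. by rewrite /sref_perm; case: ifP => _; apply: tpermK. Qed.

Lemma sref_flip_perm i k : sref_flip i (sref_perm i k) = sref_flip i k.
Proof.
rewrite /sref_flip /sref_perm; case: eqP => //= _.
by case: tpermP => [->|->|/eqP ? /eqP ?]; rewrite ?eqxx ?orbT.
Qed.

Lemma rsrefK i : involutive (rsref i).
Proof.
case=> s e; rewrite /rsref /=; congr pair.
  by apply/permP => k; rewrite !permM sref_permK.
by apply/ffunP => k; rewrite !ffunE sref_flip_perm sref_permK addbA addbb.
Qed.

Hypothesis n_gt1 : (1 < n)%N.

Lemma sref_ord i k : sref i (k.+1)%:Z = negif (sref_flip i k) ((sref_perm i k).+1)%:Z.
Proof.
have n_gt0 : (0 < n)%N by lia.
rewrite /sref_flip /sref_perm; case: eqP => [i0|i_neq0] /=.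
  have e0 : val (insubd i 0%N) = 0%N by rewrite insubdK.
  have e1 : val (insubd i 1%N) = 1%N by rewrite insubdK.
  rewrite /sref i0 /=; case: tpermP => [->|->|/eqP k0 /eqP k1].
  - by rewrite eqxx e1 e0.
  - by rewrite eqxx orbT e0 e1.
  rewrite (negbTE k0) (negbTE k1) /=.
  by move: k0 k1; rewrite -!val_eqE e0 e1; case_eqs.
have i_gt0 : (0 < i)%N by rewrite lt0n; apply/eqP.
have e1 : val (insubd i i.-1) = i.-1 by rewrite insubdK //; have := ltn_ord i; lia.
have slot_i : slot i = i%:Z by move: i_gt0; case: (nat_of_ord i).
rewrite /sref slot_i /=; case: tpermP => [->|->|/eqP k1 /eqP k0]; rewrite ?e1 /=.
- by case_eqs.
- by case_eqs.
by move: k0 k1; rewrite -!val_eqE e1; case_eqs.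
Qed.

Lemma sact_rsref i p z : inpm n z -> sact (rsref i p) z = sact p (sref i z).
Proof.
case/inpmP=> k [b ->].
have srefnegif c x : sref i (negif c x) = negif c (sref i x) by case: c; rewrite //= srefN.
rewrite srefnegif !sact_negif sact_ord sref_ord sact_negif sact_ord.
by rewrite !spvalE /rsref /= ffunE permM negif_addb.
Qed.

End Reflection.

Definition desc_at n (i : nat) (p : sperm n) : bool := sact p (slot i.+1) < sact p (slot i).

Definition idesc_at n (j : nat) (p : sperm n) : bool := desc_at j (spinv p).

(* p maps (slot i, slot i.+1) onto +-(slot j, slot j.+1) or +-(slot j.+1, slot j),
   see linkedE. *)
Definition linked n (i j : nat) (p : sperm n) : bool :=
  sref_inversion i (sact (spinv p) (slot j)) (sact (spinv p) (slot j.+1)).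

Definition lsref n (j : 'I_n) (p : sperm n) : sperm n := spinv (rsref j (spinv p)).

Section Descents.
Variables (n : nat) (n_gt1 : (1 < n)%N).
Implicit Types (i j : 'I_n) (p : sperm n).

Lemma inpm_slot_ord i : inpm n (slot i).
Proof. by case/andP: (inpm_slot n_gt1 (ltn_ord i)). Qed.

Lemma inpm_slotS_ord i : inpm n (slot i.+1).
Proof. by case/andP: (inpm_slot n_gt1 (ltn_ord i)). Qed.

Local Hint Resolve inpm_slot_ord inpm_slotS_ord : core.

Lemma des_desc_at p : des p = #|[set i : 'I_n | desc_at i p]|.
Proof. by apply: eq_card => i; rewrite !inE /desc_at !sact_slot. Qed.

Lemma ides_idesc_at p : ides p = #|[set j : 'I_n | idesc_at j p]|.
Proof. exact: des_desc_at. Qed.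

Lemma desc_at_rsref i p : desc_at i (rsref i p) = ~~ desc_at i p.
Proof.
rewrite /desc_at !sact_rsref // sref_slot sref_slotS -leNgt le_eqVlt.
by rewrite sact_eq ?sact_inpm // sactK // lt_eqF ?slot_lt.
Qed.

Lemma sact_spinv_rsref i p z : inpm n z ->
  sact (spinv (rsref i p)) z = sref i (sact (spinv p) z).
Proof.
move=> zn; set w := sref i _.
have wn : inpm n w by apply: sref_inpm => //; exact: sact_inpm.
by rewrite -[in LHS](_ : sact (rsref i p) w = z) ?sactK // sact_rsref // srefK sactVK.
Qed.

Lemma idesc_at_rsref i j p : ~~ linked i j p -> idesc_at j (rsref i p) = idesc_at j p.
Proof.
move=> not_linked; rewrite /idesc_at /desc_at !sact_spinv_rsref //.
by rewrite sref_lt // ?sact_neq0 // sact_norm_neq // slot_norm_neq.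
Qed.

Lemma linked_rsref i j p : linked i j (rsref i p) = linked i j p.
Proof. by rewrite /linked !sact_spinv_rsref // sref_inversion_sref. Qed.

Lemma spinv_lsref j p : spinv (lsref j p) = rsref j (spinv p).
Proof. exact: spinvK. Qed.

Lemma lsrefK j : involutive (lsref j).
Proof. by move=> p; rewrite /lsref spinvK rsrefK spinvK. Qed.

Lemma idesc_at_lsref j p : idesc_at j (lsref j p) = ~~ idesc_at j p.
Proof. by rewrite /idesc_at spinv_lsref desc_at_rsref. Qed.

Lemma linked_lsref i j p : linked i j (lsref j p) = linked i j p.
Proof. by rewrite /linked spinv_lsref !sact_rsref // sref_slot sref_slotS sref_inversionC. Qed.

Lemma linkedE i j p : linked i j p = sref_inversion j (sact p (slot i)) (sact p (slot i.+1)).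
Proof.
have slotN k : inpm n (- slot k) = inpm n (slot k) by rewrite inpmN.
rewrite /linked /sref_inversion !(sact_eq p) ?slotN // !(sactN (spinv p)).
set x := sact (spinv p) (slot j); set y := sact (spinv p) (slot j.+1).
by apply/idP/idP; case/or4P => /andP [/eqP -> /eqP ->]; rewrite ?opprK !eqxx ?orbT.
Qed.

Lemma linked_desc_at i j p : linked i j p -> desc_at i p = idesc_at j p.
Proof.
rewrite /linked /idesc_at /desc_at.
have := sactVK p (inpm_slot_ord j); have := sactVK p (inpm_slotS_ord j).
set x := sact (spinv p) (slot j); set y := sact (spinv p) (slot j.+1).
move=> py px; have := slot_lt i; have := slot_lt j.
move=> lt_j lt_i; case/or4P => /andP [/eqP xi /eqP yi].
- by rewrite -xi -yi px py; lia.
- by rewrite -xi -yi px py; lia.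
- by rewrite -[slot i]opprK -[slot i.+1]opprK -xi -yi !sactN px py; lia.
- by rewrite -[slot i]opprK -[slot i.+1]opprK -xi -yi !sactN px py; lia.
Qed.

End Descents.

Definition Dn n := [set p : sperm n | speven p].

Section Parity.
Variables (n : nat) (n_gt1 : (1 < n)%N).
Implicit Types (i j : 'I_n) (p : sperm n).

Lemma speven_spinv p : speven (spinv p) = speven p.
Proof.
rewrite /speven -(card_set_perm p.1^-1 (fun i => p.2 i)).
by congr (~~ odd _); apply: eq_card => x; rewrite !inE ffunE.
Qed.

Lemma sref_flip_even i : ~~ odd #|[set k | sref_flip i k]|.
Proof.
rewrite /sref_flip; case: eqP => /= [_|_]; last first.
  by rewrite (_ : [set k | false] = set0) ?cards0 //; apply/setP => k; rewrite !inE.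
rewrite (_ : [set k | _] = [set insubd i 0%N; insubd i 1%N]); last by apply/setP => k; rewrite !inE.
by rewrite cards2 -val_eqE !insubdK //=; lia.
Qed.

Lemma speven_rsref i p : speven (rsref i p) = speven p.
Proof.
rewrite /speven (eq_card (B := [set k | sref_flip i k (+) p.2 (sref_perm i k)])); last first.
  by move=> k; rewrite !inE ffunE.
by rewrite odd_card_addb (card_set_perm (sref_perm i) (fun k => p.2 k)) (negbTE (sref_flip_even i)).
Qed.

Lemma speven_lsref j p : speven (lsref j p) = speven p.
Proof. by rewrite /lsref speven_spinv speven_rsref speven_spinv. Qed.

End Parity.

Section Sums.
Variables (n : nat) (n_gt1 : (1 < n)%N).
Implicit Types (i j : 'I_n) (p : sperm n).
Local Open Scope nat_scope.

Lemma card_desc_idesc i j :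
  4 * #|[set p in Dn n | desc_at i p && idesc_at j p]| =
  #|Dn n| + #|[set p in Dn n | linked i j p]|.
Proof.
set A1 := [set p in Dn n | linked i j p]; set A0 := [set p in Dn n | ~~ linked i j p].
have cardD : #|Dn n| = #|A1| + #|A0| := card_sepID _ _.
have cardDI : #|[set p in Dn n | desc_at i p && idesc_at j p]| =
    #|[set p in A1 | desc_at i p && idesc_at j p]| +
    #|[set p in A0 | desc_at i p && idesc_at j p]|.
  rewrite (card_sepID _ (linked i j)); congr addn; apply: eq_card => p; rewrite /A1 /A0 !inE;
  by case: (speven p) (linked i j p) (desc_at i p) (idesc_at j p) => [] [] [] [].
(* on A1 the two descents coincide and rsref i flips both *)
have half1 : 2 * #|[set p in A1 | desc_at i p && idesc_at j p]| = #|A1|.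
  rewrite (eq_card (B := [set p in A1 | desc_at i p])); last first.
    move=> p; rewrite /A1 /A0 !inE; case: (speven p) => //=.
    case: (boolP (linked i j p)) => //= lp.
    by rewrite -(linked_desc_at n_gt1 lp) andbb.
  apply: (card_involution_half (f := rsref i)); first exact: rsrefK.
    by move=> p; rewrite /A1 /A0 !inE speven_rsref // linked_rsref.
  by move=> p _; rewrite desc_at_rsref.
(* on A0, rsref i flips desc_at i but fixes idesc_at j, and lsref j flips idesc_at j *)
have half0 : 2 * #|[set p in A0 | desc_at i p && idesc_at j p]| =
               #|[set p in A0 | idesc_at j p]|.
  rewrite (eq_card (B := [set p in [set q in A0 | idesc_at j q] | desc_at i p])); last first.
    move=> p; rewrite /A1 /A0 !inE.
    by case: (speven p) (linked i j p) (desc_at i p) (idesc_at j p) => [] [] [] [].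
  apply: (card_involution_half (f := rsref i)); first exact: rsrefK.
    move=> p; rewrite /A1 /A0 !inE speven_rsref // linked_rsref // => /andP [/andP [-> lp] ip].
    by rewrite lp idesc_at_rsref.
  by move=> p _; rewrite desc_at_rsref.
have half0' : 2 * #|[set p in A0 | idesc_at j p]| = #|A0|.
  apply: (card_involution_half (f := lsref j)); first exact: lsrefK.
    by move=> p; rewrite /A1 /A0 !inE speven_lsref // linked_lsref.
  by move=> p _; rewrite idesc_at_lsref.
lia.
Qed.

Lemma sum_des_half : 2 * \sum_(p in Dn n) des p = n * #|Dn n|.
Proof.
under eq_bigr => p _ do rewrite des_desc_at.
rewrite sum_card_exchange big_distrr.
rewrite (eq_bigr (fun _ => #|Dn n|)) ?sum_nat_const ?card_ord // => i _.
apply: (card_involution_half (f := rsref i)); first exact: rsrefK.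
  by move=> p; rewrite !inE speven_rsref.
by move=> p _; rewrite desc_at_rsref.
Qed.

Lemma sum_ides_half : 2 * \sum_(p in Dn n) ides p = n * #|Dn n|.
Proof.
under eq_bigr => p _ do rewrite ides_idesc_at.
rewrite sum_card_exchange big_distrr.
rewrite (eq_bigr (fun _ => #|Dn n|)) ?sum_nat_const ?card_ord // => j _.
apply: (card_involution_half (f := lsref j)); first exact: lsrefK.
  by move=> p; rewrite !inE speven_lsref.
by move=> p _; rewrite idesc_at_lsref.
Qed.

Lemma sum_ides_sq : \sum_(p in Dn n) ides p ^ 2 = \sum_(p in Dn n) des p ^ 2.
Proof.
rewrite [RHS](reindex_inj (inv_inj (@spinvK n))).
by apply: eq_big => p; rewrite ?inE ?speven_spinv.
Qed.

Lemma sum_des_ides : 4 * \sum_(p in Dn n) des p * ides p =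
  n * n * #|Dn n| + \sum_(i < n) \sum_(j < n) #|[set p in Dn n | linked i j p]|.
Proof.
under eq_bigr => p _ do rewrite des_desc_at ides_idesc_at.
rewrite sum_card_mul_exchange big_distrr /=.
under eq_bigr => i _ do rewrite big_distrr /=.
under eq_bigr => i _ do under eq_bigr => j _ do rewrite card_desc_idesc.
under eq_bigr => i _ do rewrite big_split /= sum_nat_const card_ord.
by rewrite big_split /= sum_nat_const card_ord mulnA.
Qed.

End Sums.

Section Fibers.
Variable n : nat.
Implicit Types (p : sperm n) (x y u v : int).

Lemma sact_ord_eq p b c (k m : 'I_n) :
  (sact p (negif b k.+1%:Z) == negif c m.+1%:Z) = (p.1 k == m) && (p.2 k == b (+) c).
Proof.
rewrite sact_negif negif_eq sact_ord spvalE -negif_addb -val_eqE /=.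
by case: (p.2 k) (b (+) c) => [] [] /=; lia.
Qed.

Lemma inpm_norm_neqP x y : inpm n x -> inpm n y -> `|x| != `|y| ->
  exists (kx ky : 'I_n) bx by_, [/\ kx != ky, x = negif bx kx.+1%:Z & y = negif by_ ky.+1%:Z].
Proof.
case/inpmP=> kx [bx ->] /inpmP [ky [by_ ->]] xy; exists kx, ky, bx, by_; split=> //.
by apply: contra xy => /eqP->; case: bx by_ => [] []; rewrite /= ?normrN.
Qed.

Lemma card_Dn_fiber x y u v : (2 < n)%N ->
  inpm n x -> inpm n y -> `|x| != `|y| -> inpm n u -> inpm n v -> `|u| != `|v| ->
  (#|[set p in Dn n | (sact p x, sact p y) == (u, v)]| * (4 * (n * n.-1)) = #|Dn n|)%N.
Proof.
move=> n_gt2 xn yn xy un vn uv.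
have [kx [ky [bx [by_ [kxy -> ->]]]]] := inpm_norm_neqP xn yn xy.
have [mu [mv [bu [bv [muv -> ->]]]]] := inpm_norm_neqP un vn uv.
have -> : [set p in Dn n | (sact p (negif bx kx.+1%:Z), sact p (negif by_ ky.+1%:Z)) ==
                           (negif bu mu.+1%:Z, negif bv mv.+1%:Z)] =
    setX (perm_fiber kx ky mu mv) (sign_fiber kx ky (bx (+) bu) (by_ (+) bv)).
  apply/setP => -[s e]; rewrite !inE xpair_eqE !sact_ord_eq /=.
  rewrite /speven /=; case: (s kx == mu); case: (s ky == mv);
  by case: (e kx == _); case: (e ky == _); rewrite /= ?andbT ?andbF.
have -> : Dn n = setX [set: {perm 'I_n}] (even_signs n) by apply/setP => -[s e]; rewrite !inE.
rewrite !cardsX cardsT card_Sn -(card_perm_fiber kxy muv).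
by rewrite -(card_sign_fiber (bx (+) bu) (by_ (+) bv) n_gt2 kxy); ring.
Qed.

End Fibers.

Lemma sref_inversionE i x y : sref_inversion i x y =
  ((x, y) \in [:: (slot i, slot i.+1); (slot i.+1, slot i);
                  (- slot i, - slot i.+1); (- slot i.+1, - slot i)]).
Proof. by rewrite /sref_inversion !inE !xpair_eqE. Qed.

Lemma card_linked n (i j : 'I_n) : (2 < n)%N ->
  (#|[set p in Dn n | linked i j p]| * (n * n.-1) = #|Dn n|)%N.
Proof.
move=> n_gt2; have n_gt1 : (1 < n)%N by lia.
set c := slot j; set d := slot j.+1.
have [cn dn] : inpm n c /\ inpm n d by split; [exact: inpm_slot_ord | exact: inpm_slotS_ord].
have [cn' dn'] : inpm n (- c) /\ inpm n (- d) by rewrite !inpmN.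
have cd : `|c| != `|d| := slot_norm_neq j.
have [dc cd' dc'] : [/\ `|d| != `|c|, `|- c| != `|- d| & `|- d| != `|- c|].
  by rewrite !normrN eq_sym cd.
have fiber u v : inpm n u -> inpm n v -> `|u| != `|v| ->
    (#|[set p in Dn n | (sact p (slot i), sact p (slot i.+1)) == (u, v)]| *
     (4 * (n * n.-1)) = #|Dn n|)%N.
  by move=> *; apply: card_Dn_fiber; rewrite ?inpm_slot_ord ?inpm_slotS_ord ?slot_norm_neq.
rewrite (eq_card (B := [set p in Dn n | (sact p (slot i), sact p (slot i.+1)) \in
    [:: (c, d); (d, c); (- c, - d); (- d, - c)]])); last first.
  by move=> p; rewrite !inE (linkedE n_gt1) sref_inversionE !inE.
rewrite card_in_mem_seq; last by move: cn dn cd; rewrite /inpm /= !inE !xpair_eqE; lia.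
move: (fiber _ _ cn dn cd) (fiber _ _ dn cn dc) (fiber _ _ cn' dn' cd') (fiber _ _ dn' cn' dc').
rewrite !big_cons big_nil; move: (n * n.-1)%N #|Dn n| => N G.
by set c1 := #|_|; set c2 := #|_|; set c3 := #|_|; set c4 := #|_|; lia.
Qed.

Lemma linked_2 (i j : 'I_2) (p : sperm 2) : speven p -> linked i j p = (i == j).
Proof.
move=> p_even; have signs : p.2 ord0 = p.2 ord_max.
  move: p_even; rewrite /speven card_set_sum !big_ord_recr big_ord0 /=.
  have -> : widen_ord (leqnSn 1) ord_max = ord0 :> 'I_2 by apply: val_inj.
  by case: (p.2 ord0); case: (p.2 ord_max).
have p1 : sact p (slot 1) = spval p ord0 := sact_ord p ord0.
have p2 : sact p (slot 2) = spval p ord_max := sact_ord p ord_max.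
have p0 : sact p (slot 0) = - spval p ord_max by rewrite -p2 -sactN.
have values : (p.1 ord0 : nat) != p.1 ord_max by rewrite val_eqE (inj_eq perm_inj).
have := ltn_ord (p.1 ord0); have := ltn_ord (p.1 ord_max).
rewrite (linkedE (isT : 1 < 2)%N) /sref_inversion.
case: i j => [[|[|?]] ?] [[|[|?]] ?] //; rewrite ?p0 ?p1 ?p2 !spvalE -signs /negif -?val_eqE /=;
  by case: (p.2 ord0); lia.
Qed.

Lemma sum_card_linked n : (1 < n)%N ->
  ((\sum_(i < n) \sum_(j < n) #|[set p in Dn n | linked i j p]|) * n.-1 = n * #|Dn n|)%N.
Proof.
case: n => [|[|[|n]]] // _.
  have card_linked_2 (i j : 'I_2) : #|[set p in Dn 2 | linked i j p]| = ((i == j) * #|Dn 2|)%N.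
    rewrite card_set_in_sum (eq_bigr (fun _ => nat_of_bool (i == j))) ?sum_nat_const 1?mulnC //.
    by move=> p; rewrite inE => p_even; rewrite linked_2.
  under eq_bigr => i _ do under eq_bigr => j _ do rewrite card_linked_2.
  by rewrite !big_ord_recr !big_ord0 /=; lia.
set S := \sum_(i < _) _.
suff : (S * (n.+3 * n.+2) = n.+3 * (n.+3 * #|Dn n.+3|))%N.
  by move/eqP; rewrite mulnCA eqn_pmul2l // => /eqP.
rewrite big_distrl /=; under eq_bigr => i _ do rewrite big_distrl /=.
under eq_bigr => i _ do under eq_bigr => j _ do rewrite card_linked //.
by rewrite !sum_nat_const !card_ord.
Qed.

Section Moments.
Variables (n : nat) (n_gt1 : (1 < n)%N).
Implicit Types (X Y : sperm n -> nat).

Lemma ED_sum X : ED X = (\sum_(p in Dn n) X p)%:R / #|Dn n|%:R.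
Proof. by rewrite /ED natr_sum; congr (_ / _); apply: eq_bigl => p; rewrite inE. Qed.

Lemma ED_ext X Y : X =1 Y -> ED X = ED Y.
Proof. by move=> XY; rewrite !ED_sum (eq_bigr _ (fun p _ => XY p)). Qed.

Lemma ED_add X Y : ED (fun p => X p + Y p)%N = ED X + ED Y.
Proof. by rewrite !ED_sum big_split natrD mulrDl. Qed.

Lemma card_Dn_neq0 : (#|Dn n|%:R : rat) != 0.
Proof.
rewrite pnatr_eq0 -lt0n; apply/card_gt0P; exists (1%g, [ffun => false]).
by rewrite !inE /speven (_ : [set i | _] = set0) ?cards0 //; apply/setP => i; rewrite !inE ffunE.
Qed.

Lemma ED_eq X (k : nat) (c : rat) : (0 < k)%N ->
  (k * \sum_(p in Dn n) X p)%N%:R = c * #|Dn n|%:R -> ED X = c / k%:R.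
Proof.
move=> k_gt0 sumX; have k_neq0 : (k%:R : rat) != 0 by rewrite pnatr_eq0 -lt0n.
rewrite ED_sum -[X in X / _](mulKf k_neq0) -natrM sumX.
by field; rewrite k_neq0 card_Dn_neq0.
Qed.

Lemma ED_des : ED (@des n) = n%:R / 2.
Proof. by apply: ED_eq; rewrite // (sum_des_half n_gt1) natrM. Qed.

Lemma ED_ides : ED (@ides n) = n%:R / 2.
Proof. by apply: ED_eq; rewrite // (sum_ides_half n_gt1) natrM. Qed.

Lemma ED_ides_sq : ED (fun p : sperm n => ides p ^ 2)%N = ED (fun p : sperm n => des p ^ 2)%N.
Proof. by rewrite !ED_sum sum_ides_sq. Qed.

Lemma ED_des_ides :
  ED (fun p : sperm n => des p * ides p)%N = (n%:R ^+ 2 + n%:R / (n%:R - 1)) / 4.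
Proof.
have n1_neq0 : (n%:R : rat) - 1 != 0 by rewrite subr_eq0 pnatr_eq1; lia.
have linked_sum := sum_card_linked n_gt1.
move/(congr1 (fun m => m%:R : rat)): linked_sum.
rewrite !natrM -subn1 natrB 1?ltnW // => linked_sum.
apply: ED_eq; rewrite // (sum_des_ides n_gt1) natrD !natrM.
rewrite -[X in _ + X = _](mulfK n1_neq0) linked_sum.
by field.
Qed.

End Moments.

Theorem proposition5p8 (n : nat) (hn : (2 <= n)%N) :
  ED (fun p : sperm n => (des p + ides p)%N) = n%:R /\
  VD (fun p : sperm n => (des p + ides p)%N) =
    2 * VD (fun p : sperm n => des p) + n%:R / (2 * n - 2)%:R.
Proof.
have n1_neq0 : (n%:R : rat) - 1 != 0 by rewrite subr_eq0 pnatr_eq1; lia.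
have -> : (2 * n - 2)%N%:R = 2 * (n%:R - 1) :> rat.
  by rewrite (_ : 2 * n - 2 = 2 * (n - 1))%N ?natrM ?natrB //; lia.
have sqrD (p : sperm n) : ((des p + ides p) ^ 2 =
    des p ^ 2 + ides p ^ 2 + (des p * ides p + des p * ides p))%N.
  by rewrite sqrnD addnn -mul2n.
rewrite /VD (ED_ext sqrD) !ED_add ED_ides_sq (ED_des hn) (ED_ides hn) (ED_des_ides hn).
by split; field.
Qed.
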